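(* There exist finite-dimensional real representations $V$ and $U$ of $SL(2,\mathbb{R})$, an $SL(2,\mathbb{R})$-invariant subset $D\subseteq V$, a continuous $SL(2,\mathbb{R})$-equivariant function $F:D\to U$, and a compact subset $K\subseteq D$ such that there is no sequence of functions of the form $h_k\cdot P_k$, with $P_k:V\to U$ an $SL(2,\mathbb{R})$-equivariant polynomial map and $h_k:D\to\mathbb{R}$ an $SL(2,\mathbb{R})$-invariant function, that converges pointwise to $F$ on $K$.
   Context: A map $F$ between sets on which $SL(2,\mathbb{R})$ acts (linearly on representations) is equivariant if $F(g\cdot v)=g\cdot F(v)$ for all $g\in SL(2,\mathbb{R})$ and $v$ in its domain; a real-valued function $h$ is invariant if $h(g\cdot v)=h(v)$. *)

From mathcomp Require Import all_boot all_order all_algebra.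
From mathcomp Require Import all_classical all_reals all_analysis.
Set Implicit Arguments. Unset Strict Implicit. Unset Printing Implicit Defensive.
Import Order.TTheory GRing.Theory Num.Theory.
Import numFieldNormedType.Exports.
Local Open Scope classical_set_scope.
Local Open Scope ring_scope.

Definition SL2 (R : realType) : set 'M[R]_2 := [set g | \det g = 1].

(* A finite-dimensional real representation of SL(2,R) on R^n (column
   vectors, g acts by v |-> rho g *m v): a continuous group homomorphism
   SL(2,R) -> GL_n(R). *)
Definition is_rep (R : realType) (n : nat) (rho : 'M[R]_2 -> 'M[R]_n) : Prop :=
  rho 1%:M = 1%:M /\
  (forall g h, SL2 g -> SL2 h -> rho (g *m h) = rho g *m rho h) /\
  {within @SL2 R, continuous rho}.

Inductive poly_fun (R : realType) (n : nat) : ('cV[R]_n -> R) -> Prop :=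
| poly_const (c : R) : poly_fun (fun _ => c)
| poly_coord (i : 'I_n) : poly_fun (fun v => v i ord0)
| poly_add f g : poly_fun f -> poly_fun g -> poly_fun (fun v => f v + g v)
| poly_mul f g : poly_fun f -> poly_fun g -> poly_fun (fun v => f v * g v).

Definition poly_map (R : realType) (n m : nat) (P : 'cV[R]_n -> 'cV[R]_m) : Prop :=
  forall i : 'I_m, poly_fun (fun v => P v i ord0).

From mathcomp Require Import all_boot all_order all_algebra.
From mathcomp Require Import all_classical all_reals all_analysis.
From mathcomp Require Import mxtens ring.
Import Order.TTheory GRing.Theory Num.Theory.
Import numFieldNormedType.Exports.
Local Open Scope classical_set_scope.
Local Open Scope ring_scope.

(* Take V = U = R^2 (x) R^2 with g acting as g (x) g, D = {+-(u (x) u) | u <> 0},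
   and let F be the identity on the sheet {u (x) u} and the invariant vector
   w = e0 (x) e1 - e1 (x) e0 on the sheet {-(u (x) u)}; the two sheets are
   separated by the sign of the trace x_00 + x_11, so F is continuous.
   Let K = {t0, -t0} with t0 = e0 (x) e0.  Equivariance of a polynomial P under
   diag(r, 1/r) gives P(l t0)_00 = l P(t0)_00 and P(l t0)_01 = P(t0)_01 for
   l > 0; both sides are polynomial in l, so this persists at l = -1.  Writing
   a = h_k(t0), b = h_k(-t0), x = P_k(t0)_00 and y = P_k(t0)_01, convergence to
   F on K would give a x -> 1, a y -> 0, b x -> 0 and b y -> 1, which is
   impossible since (a x)(b y) = (a y)(b x). *)

Section Limits.
Variable R : realType.

Lemma cvg_mx_entries {T} (F : set_system T) {FF : Filter F} m n
    (f : T -> 'M[R]_(m, n)) (M : 'M[R]_(m, n)) :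
  (forall i j, (fun x => f x i j) @ F --> M i j) -> f @ F --> M.
Proof.
move=> fijM; apply/cvgrPdist_le => /= e e_gt0; near=> x.
rewrite /Num.Def.normr /= mx_normrE (bigmax_le _ (ltW e_gt0)) //= => ij _.
rewrite !mxE /=; move: ij; near: x; apply: filter_forall => /= ij.
exact: (cvgrPdist_le _ _).1 (fijM ij.1 ij.2) e e_gt0.
Unshelve. all: by end_near. Qed.

Lemma cvg_mx_entry {T} (F : set_system T) {FF : Filter F} m n
    (f : T -> 'M[R]_(m, n)) (M : 'M[R]_(m, n)) :
  f @ F --> M -> forall i j, (fun x => f x i j) @ F --> M i j.
Proof. by move=> fM i j; apply: cvg_comp fM (@coord_continuous R m n i j M). Qed.

Lemma continuous_mx_entries (T : topologicalType) m n (f : T -> 'M[R]_(m, n)) :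
  (forall i j, continuous (fun x => f x i j)) -> continuous f.
Proof. by move=> fij x; apply: cvg_mx_entries => i j; apply: fij. Qed.

Lemma continuous_within_sign_if (T : topologicalType) (V : topologicalType)
    (D : set T) (s : T -> R) (f g : T -> V) :
  continuous s -> continuous f -> continuous g ->
  (forall x, D x -> s x != 0) ->
  {within D, continuous (fun x => if 0 < s x then f x else g x)}.
Proof.
move=> s_cont f_cont g_cont s_neq0; apply: continuous_in_subspaceT => x.
rewrite inE => /s_neq0; case: (ltgtP (s x) 0) => // sx _.
- have sN : \forall y \near x, s y < 0 := s_cont x _ (lt_nbhsl sx).
  rewrite /continuous_at ltNge ltW //=.
  have gE : {near x, g =1 (fun y => if 0 < s y then f y else g y)}.
    by near=> y; rewrite ltNge ltW //; near: y.
  exact: cvg_trans (near_eq_cvg gE) (g_cont x).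
- have sP : \forall y \near x, 0 < s y := s_cont x _ (lt_nbhsr sx).
  rewrite /continuous_at sx.
  have fE : {near x, f =1 (fun y => if 0 < s y then f y else g y)}.
    by near=> y; rewrite ifT //; near: y.
  exact: cvg_trans (near_eq_cvg fE) (f_cont x).
Unshelve. all: by end_near. Qed.

Lemma cross_products_cvg_absurd (a b x y : nat -> R) :
  (fun k => a k * x k) @ \oo --> (1 : R) ->
  (fun k => b k * y k) @ \oo --> (1 : R) ->
  (fun k => a k * y k) @ \oo --> (0 : R) ->
  (fun k => b k * x k) @ \oo --> (0 : R) -> False.
Proof.
move=> ax1 by1 ay0 bx0.
have prod1 : (fun k => a k * x k * (b k * y k)) @ \oo --> (1 * 1 : R).
  exact: cvgM.
have prod0 : (fun k => a k * x k * (b k * y k)) @ \oo --> (0 * 0 : R).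
  have -> : (fun k => a k * x k * (b k * y k)) =
            (fun k => a k * y k * (b k * x k)) by apply/funext => k; ring.
  exact: cvgM.
have := cvg_unique _ prod1 prod0.
move/(_ (@norm_hausdorff _ R^o) (fmap_proper_filter _ eventually_filter)).
by rewrite mulr1 mulr0 => /eqP; rewrite oner_eq0.
Qed.

End Limits.

Section PolynomialFunctions.
Variable R : realType.

Lemma poly_fun_on_line n (v : 'cV[R]_n) (f : 'cV[R]_n -> R) :
  poly_fun f -> exists p : {poly R}, forall l, f (l *: v) = p.[l].
Proof.
elim=> [c | i | f1 g1 _ [p fp] _ [q gq] | f1 g1 _ [p fp] _ [q gq]].
- by exists c%:P => l; rewrite hornerC.
- by exists ((v i 0)%:P * 'X) => l; rewrite !mxE hornerCM hornerX mulrC.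
- by exists (p + q) => l; rewrite fp gq hornerD.
- by exists (p * q) => l; rewrite fp gq hornerM.
Qed.

Lemma poly_eq0_on_pos (p : {poly R}) : (forall l, 0 < l -> p.[l] = 0) -> p = 0.
Proof.
move=> p_pos0; apply/eqP; apply: contraT => p_neq0.
have := max_poly_roots p_neq0 (rs := mkseq (fun i => i.+1%:R) (size p)).
rewrite size_mkseq ltnn; apply.
  by apply/allP => _ /mapP [i _ ->]; apply/rootP/p_pos0/ltr0Sn.
by rewrite map_inj_uniq ?iota_uniq // => i j /eqP; rewrite eqr_nat eqSS => /eqP.
Qed.

Lemma poly_fun_affine_on_ray n (v : 'cV[R]_n) (f : 'cV[R]_n -> R) (a b : R) :
  poly_fun f -> (forall l, 0 < l -> f (l *: v) = a * l + b) -> f (- v) = b - a.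
Proof.
move=> /(poly_fun_on_line _ v) [p fp] f_affine.
have p_affine : p = a%:P * 'X + b%:P.
  apply/eqP; rewrite -subr_eq0; apply/eqP/poly_eq0_on_pos => l l_gt0.
  by rewrite !hornerE -fp f_affine // subrr.
by rewrite -scaleN1r fp p_affine !hornerE; ring.
Qed.

End PolynomialFunctions.

Section TensorSquare.
Variable R : realType.

Lemma tensmx_cVE m n (u : 'cV[R]_m) (v : 'cV[R]_n) i j :
  (u *t v) (mxtens_index (i, j)) 0 = u i 0 * v j 0.
Proof.
rewrite [in LHS](_ : 0 = mxtens_index (0, 0) :> 'I_(1 * 1)) ?tensmxE //.
exact: val_inj.
Qed.

Lemma tensmx_mul_cV m n p q (A : 'M[R]_(m, n)) (B : 'M[R]_(p, q))
    (u : 'cV[R]_n) (v : 'cV[R]_q) :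
  (A *t B) *m (u *t v) = (A *m u) *t (B *m v) :> 'cV_(m * p).
Proof. exact: (@tensmx_mul R m n p q 1 1). Qed.

Lemma tensmx_cVP n (x y : 'cV[R]_(n * n)) :
  (forall i j, x (mxtens_index (i, j)) 0 = y (mxtens_index (i, j)) 0) -> x = y.
Proof.
by move=> xy; apply/matrixP => k c; rewrite (ord1 c); case: (mxtens_indexP k).
Qed.

Lemma tensmx11 m n : (1%:M : 'M[R]_m) *t (1%:M : 'M[R]_n) = 1%:M.
Proof.
apply/matrixP => k l.
case: (mxtens_indexP k) => i j; case: (mxtens_indexP l) => i' j'.
rewrite tensmxE !mxE (inj_eq (can_inj (@mxtens_indexK _ _))) xpair_eqE.
by rewrite -natrM mulnb.
Qed.

Lemma tensmx_continuous m n : continuous (fun g : 'M[R]_(m, n) => g *t g).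
Proof.
apply: continuous_mx_entries => k l.
case: (mxtens_indexP k) => i j; case: (mxtens_indexP l) => i' j'.
rewrite (_ : (fun g => _) = fun g : 'M[R]_(m, n) => g i i' * g j j'); last first.
  by apply/funext => g; rewrite tensmxE.
move=> g.
exact: cvgM (@coord_continuous R m n i i' g) (@coord_continuous R m n j j' g).
Qed.

Lemma tensmx_square_rep : is_rep (fun g : 'M[R]_2 => g *t g).
Proof.
split; first exact: tensmx11.
split; first by move=> g h _ _; rewrite tensmx_mul.
exact/continuous_subspaceT/tensmx_continuous.
Qed.

Lemma ord2_cases (i : 'I_2) : i = 0 \/ i = 1.
Proof. by case: i => [[|[|//]] ?]; [left | right]; apply: val_inj. Qed.

Definition e0 : 'cV[R]_2 := delta_mx 0 0.
Definition e1 : 'cV[R]_2 := delta_mx 1 0.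

Lemma e0_neq0 : e0 != 0.
Proof. by apply/eqP => /matrixP /(_ 0 0) /eqP; rewrite !mxE oner_eq0. Qed.

Definition wedge : 'cV[R]_(2 * 2) := e0 *t e1 - e1 *t e0.

Lemma det_mx22 (g : 'M[R]_2) : \det g = g 0 0 * g 1 1 - g 0 1 * g 1 0.
Proof.
rewrite (expand_det_row _ 0) !big_ord_recl big_ord0 /cofactor !det_mx11 !mxE.
have -> : lift 0 0 = 1 :> 'I_2 by apply: val_inj.
have -> : lift 1 0 = 0 :> 'I_2 by apply: val_inj.
rewrite /= expr0 expr1; ring.
Qed.

Lemma tensmx_antisym2 (u v : 'cV[R]_2) :
  u *t v - v *t u = (u 0 0 * v 1 0 - u 1 0 * v 0 0) *: wedge.
Proof.
apply: tensmx_cVP => i j; rewrite !(tensmx_cVE, mxE).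
by case: (ord2_cases i) => ->; case: (ord2_cases j) => ->; rewrite /=; ring.
Qed.

Lemma tensmx_square_wedge (g : 'M[R]_2) : (g *t g) *m wedge = \det g *: wedge.
Proof.
rewrite {1}/wedge mulmxBr !tensmx_mul_cV -!colE tensmx_antisym2 det_mx22 !mxE.
by congr (_ *: _); rewrite /=; ring.
Qed.

End TensorSquare.

Section Counterexample.
Variable R : realType.

Local Notation i00 := (@mxtens_index 2 2 (0, 0)).
Local Notation i01 := (@mxtens_index 2 2 (0, 1)).
Local Notation i11 := (@mxtens_index 2 2 (1, 1)).

Lemma SL2_unitmx (g : 'M[R]_2) : SL2 g -> g \in unitmx.
Proof. by rewrite /SL2 unitmxE => -> /=; exact: unitr1. Qed.

Lemma mulmx_unit_neq0 n (g : 'M[R]_n) (u : 'cV[R]_n) :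
  g \in unitmx -> u != 0 -> g *m u != 0.
Proof.
move=> g_unit; apply: contra => /eqP gu0.
by rewrite -(mulKmx g_unit u) gu0 mulmx0.
Qed.

Definition signed_squares : set 'cV[R]_(2 * 2) :=
  [set x | exists2 u : 'cV[R]_2, u != 0 & x = u *t u \/ x = - (u *t u)].

Definition sq_trace (x : 'cV[R]_(2 * 2)) : R := x i00 0 + x i11 0.

Definition square_or_wedge (x : 'cV[R]_(2 * 2)) : 'cV[R]_(2 * 2) :=
  if 0 < sq_trace x then x else wedge R.

Lemma sq_traceN x : sq_trace (- x) = - sq_trace x.
Proof. by rewrite /sq_trace !mxE opprD. Qed.

Lemma sq_trace_continuous : continuous sq_trace.
Proof.
move=> x; rewrite /sq_trace.
exact: cvgD (@coord_continuous R _ _ i00 0 x) (@coord_continuous R _ _ i11 0 x).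
Qed.

Lemma sq_trace_square_gt0 (u : 'cV[R]_2) : u != 0 -> 0 < sq_trace (u *t u).
Proof.
move=> u_neq0; rewrite /sq_trace !tensmx_cVE -!expr2.
rewrite lt_def addr_ge0 ?sqr_ge0 // andbT paddr_eq0 ?sqr_ge0 // !sqrf_eq0.
apply: contra u_neq0 => /andP[/eqP u0 /eqP u1]; apply/eqP/matrixP => i j.
by rewrite (ord1 j) mxE; case: (ord2_cases i) => ->.
Qed.

Lemma sq_trace_neq0 x : signed_squares x -> sq_trace x != 0.
Proof.
move=> [u u_neq0 [->|->]]; rewrite ?sq_traceN ?oppr_eq0 gt_eqF //;
  exact: sq_trace_square_gt0.
Qed.

Lemma signed_squares_invariant g v :
  SL2 g -> signed_squares v -> signed_squares ((g *t g) *m v).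
Proof.
move=> /SL2_unitmx g_unit [u u_neq0 v_u]; exists (g *m u).
  exact: mulmx_unit_neq0.
by case: v_u => ->; [left | right]; rewrite ?mulmxN tensmx_mul_cV.
Qed.

Lemma square_or_wedge_continuous :
  {within signed_squares, continuous square_or_wedge}.
Proof.
apply: (@continuous_within_sign_if R _ _ _ sq_trace id (fun=> wedge R)).
- exact: sq_trace_continuous.
- by move=> x; exact: cvg_id.
- exact: cst_continuous.
- exact: sq_trace_neq0.
Qed.

Lemma square_or_wedge_equivariant g v : SL2 g -> signed_squares v ->
  square_or_wedge ((g *t g) *m v) = (g *t g) *m square_or_wedge v.
Proof.
move=> g_SL2 [u u_neq0 v_u].
have gu_neq0 : g *m u != 0 by rewrite mulmx_unit_neq0 // SL2_unitmx.
have u_gt0 := sq_trace_square_gt0 _ u_neq0.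
have gu_gt0 := sq_trace_square_gt0 _ gu_neq0.
rewrite /square_or_wedge; case: v_u => ->; rewrite ?mulmxN tensmx_mul_cV.
  by rewrite u_gt0 gu_gt0 tensmx_mul_cV.
rewrite !sq_traceN !oppr_gt0 !ltNge !ltW //=.
by rewrite tensmx_square_wedge g_SL2 scale1r.
Qed.

Definition t0 : 'cV[R]_(2 * 2) := e0 R *t e0 R.

Lemma t0_signed_squares : [set t0; - t0] `<=` signed_squares.
Proof.
by move=> x [->|->]; (exists (e0 R); first exact: e0_neq0); [left | right].
Qed.

Definition diag2 (r : R) : 'M[R]_2 :=
  diag_mx (\row_i (if i == 0 then r else r^-1)).

Lemma diag2_SL2 r : r != 0 -> SL2 (diag2 r).
Proof.
by move=> r_neq0; rewrite /SL2 /= det_mx22 !mxE /= mulfV // mul0r subr0.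
Qed.

Lemma diag_tensmx_mulmx n (a : 'rV[R]_n) (w : 'cV[R]_(n * n)) i j :
  ((diag_mx a *t diag_mx a) *m w) (mxtens_index (i, j)) 0
  = a 0 i * a 0 j * w (mxtens_index (i, j)) 0.
Proof.
rewrite mxE (bigD1 (mxtens_index (i, j))) //= tensmxE !mxE !eqxx !mulr1n.
rewrite big1 ?addr0 // => k; case: (mxtens_indexP k) => i' j'.
rewrite (inj_eq (can_inj (@mxtens_indexK _ _))) xpair_eqE negb_and tensmxE !mxE.
rewrite (eq_sym i') (eq_sym j').
by case/orP => /negbTE ->; rewrite /= ?(mulr0n, mulr0, mul0r).
Qed.

Lemma equivariant_on_t0_ray (P : 'cV[R]_(2 * 2) -> 'cV[R]_(2 * 2)) l :
  (forall g v, SL2 g -> P ((g *t g) *m v) = (g *t g) *m P v) -> 0 < l ->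
  P (l *: t0) i00 0 = l * P t0 i00 0 /\ P (l *: t0) i01 0 = P t0 i01 0.
Proof.
move=> P_equiv l_gt0; set r := Num.sqrt l.
have r_neq0 : r != 0 by rewrite gt_eqF // sqrtr_gt0.
have l_r : l = r * r by rewrite -expr2 sqr_sqrtr // ltW.
have -> : l *: t0 = (diag2 r *t diag2 r) *m t0.
  apply: tensmx_cVP => i j.
  rewrite diag_tensmx_mulmx [in LHS]mxE /t0 !tensmx_cVE /e0 !mxE.
  by case: (ord2_cases i) => ->; case: (ord2_cases j) => ->; rewrite /= l_r; ring.
rewrite P_equiv; last exact: diag2_SL2.
by rewrite /diag2 !diag_tensmx_mulmx !mxE /= mulfV // l_r; split; ring.
Qed.

Lemma equivariant_poly_at_neg_t0 (P : 'cV[R]_(2 * 2) -> 'cV[R]_(2 * 2)) :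
  poly_map P -> (forall g v, SL2 g -> P ((g *t g) *m v) = (g *t g) *m P v) ->
  P (- t0) i00 0 = - P t0 i00 0 /\ P (- t0) i01 0 = P t0 i01 0.
Proof.
move=> P_poly P_equiv; split.
  rewrite -[RHS]add0r; apply: poly_fun_affine_on_ray (P_poly _) _ => l l_gt0.
  by rewrite (equivariant_on_t0_ray _ _ P_equiv l_gt0).1 mulrC addr0.
rewrite -[RHS]subr0; apply: poly_fun_affine_on_ray (P_poly _) _ => l l_gt0.
by rewrite (equivariant_on_t0_ray _ _ P_equiv l_gt0).2 mul0r add0r.
Qed.

Lemma no_equivariant_poly_approximation (h : nat -> 'cV[R]_(2 * 2) -> R)
    (P : nat -> 'cV[R]_(2 * 2) -> 'cV[R]_(2 * 2)) :
  (forall k, poly_map (P k)) ->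
  (forall k g v, SL2 g -> P k ((g *t g) *m v) = (g *t g) *m P k v) ->
  ~ (forall x, [set t0; - t0] x ->
       (fun k => h k x *: P k x) @ \oo --> square_or_wedge x).
Proof.
move=> P_poly P_equiv approx.
have cvg_entry x i : [set t0; - t0] x ->
    (fun k => h k x * P k x i 0) @ \oo --> square_or_wedge x i 0.
  move=> /approx /cvg_mx_entry /(_ i 0).
  rewrite (_ : (fun k => _) = fun k => h k x * P k x i 0) //.
  by rewrite funeqE => k; rewrite mxE.
have F_t0 : square_or_wedge t0 = t0.
  by rewrite /square_or_wedge sq_trace_square_gt0 // e0_neq0.
have F_Nt0 : square_or_wedge (- t0) = wedge R.
  rewrite /square_or_wedge sq_traceN oppr_gt0 ltNge ltW //.
  by rewrite sq_trace_square_gt0 // e0_neq0.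
have P_Nt0 k := equivariant_poly_at_neg_t0 _ (P_poly k) (P_equiv k).
apply: (@cross_products_cvg_absurd R (h^~ t0) (h^~ (- t0))
  (fun k => P k t0 i00 0) (fun k => P k t0 i01 0)).
- have := cvg_entry t0 i00 (or_introl erefl).
  by rewrite F_t0 tensmx_cVE !mxE mulr1.
- have := cvg_entry (- t0) i01 (or_intror erefl).
  rewrite F_Nt0 !(tensmx_cVE, mxE) /= mulr1 mulr0 subr0.
  rewrite (_ : (fun k => _) = fun k => h k (- t0) * P k t0 i01 0) //.
  by rewrite funeqE => k; rewrite (P_Nt0 k).2.
- have := cvg_entry t0 i01 (or_introl erefl).
  by rewrite F_t0 tensmx_cVE !mxE mulr0.
- have := cvg_entry (- t0) i00 (or_intror erefl).
  rewrite F_Nt0 !(tensmx_cVE, mxE) /= mulr0 mul0r subrr => /cvgN; rewrite oppr0.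
  apply: cvg_trans; apply: near_eq_cvg; apply: nearW => k /=.
  by rewrite opprfctE (P_Nt0 k).1 mulrN opprK.
Qed.

End Counterexample.

Theorem corollary1 (R : realType) :
  exists (n m : nat) (rhoV : 'M[R]_2 -> 'M[R]_n) (rhoU : 'M[R]_2 -> 'M[R]_m),
    is_rep rhoV /\ is_rep rhoU /\
    exists (D : set 'cV[R]_n) (F : 'cV[R]_n -> 'cV[R]_m) (K : set 'cV[R]_n),
      (forall g v, SL2 g -> D v -> D (rhoV g *m v)) /\
      {within D, continuous F} /\
      (forall g v, SL2 g -> D v -> F (rhoV g *m v) = rhoU g *m F v) /\
      K `<=` D /\ compact K /\
      ~ exists (h : nat -> 'cV[R]_n -> R) (P : nat -> 'cV[R]_n -> 'cV[R]_m),
          (forall k, poly_map (P k) /\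
             (forall g v, SL2 g -> P k (rhoV g *m v) = rhoU g *m P k v) /\
             (forall g v, SL2 g -> D v -> h k (rhoV g *m v) = h k v)) /\
          (forall x, K x -> (fun k => h k x *: P k x) @ \oo --> F x).
Proof.
exists (2 * 2)%N, (2 * 2)%N, (fun g => g *t g), (fun g => g *t g).
split; first exact: tensmx_square_rep.
split; first exact: tensmx_square_rep.
exists (signed_squares R), (square_or_wedge R), [set t0 R; - t0 R].
split; first exact: signed_squares_invariant.
split; first exact: square_or_wedge_continuous.
split; first exact: square_or_wedge_equivariant.
split; first exact: t0_signed_squares.
split; first by apply: compactU; apply: compact_set1.
move=> [h [P [hP approx]]].
have P_poly k := (hP k).1.
have P_equiv k := (hP k).2.1.
exact: (@no_equivariant_poly_approximation R h P P_poly P_equiv approx).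
Qed.
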